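(* Let $T\ge 2$, let $z_{1:T}\in[V]^T$ with last token $z_T=q$, and suppose the orthonormality assumption (A) holds. For $v\in[V]$ let $f(v)=\#\{s\in\{2,\dots,T\}: z_{s-1}=q,\ z_s=v\}$, the number of occurrences of the pattern ''$q\,v$'' in $z_{1:T}$. Let $N=\sum_{v'=1}^{V}f(v')+\mathbf 1\{z_1=q\}$ and assume $N\ge 1$. Then for every $v\in[V]$ and every fixed $\tau_3>0$, $$\lim_{\tau_2\to\infty}\ \lim_{\tau_1\to\infty}\ \xi_v(\tau_1,\tau_2,\tau_3)\;=\;\log\pi_b(v\mid q)\;+\;\tau_3\cdot\frac{f(v)+\mathbf 1\{v=q\}\,\mathbf 1\{z_1=q\}}{N}.$$
   Context: Vocabulary $[V]=\{1,\dots,V\}$, dimension $d$. Given: embedding vectors $w_E(v)\in\mathbb R^d$ and unembedding vectors $w_U(v)\in\mathbb R^d$ for $v\in[V]$; relative positional vectors $r_0,r_{-1},\dots,r_{-(T-1)}\in\mathbb R^d$; matrices $\Phi_1,W_V^2\in\mathbb R^{d\times d}$; a bigram kernel $\pi_b(u\mid v)>0$ with $\sum_u\pi_b(u\mid v)=1$; parameters $\tau_1,\tau_2,\tau_3>0$. $\sigma$ denotes the softmax. The two-layer transformer with relative positional encoding (''stronger associative memory transformer'') acts on $z_{1:T}\in[V]^T$ as follows. Set $W_K^1=\tau_1\sum_{k\in[V]}w_E(k)r_{-1}^\top$, $W_K^2=\tau_2\sum_{k\in[V]}w_E(k)(\Phi_1w_E(k))^\top$, $W_O^2=\tau_3\sum_{v\in[V]}w_U(v)(W_V^2w_E(v))^\top$.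 First layer: for $t\in[T]$ and $s\in[t]$, let $a_{t,s}=(w_E(z_s)+r_{s-t})^\top (W_K^1)^\top w_E(z_t)$ and $x^{(1)}_t=\sum_{s=1}^t\sigma(a_{t,\cdot})_s\,\Phi_1w_E(z_s)+w_E(z_t)$. Second layer: for $s\in[T]$ let $b_s=(x_s^{(1)})^\top (W_K^2)^\top x_T^{(1)}$ and $x_T^{(2)}=\sum_{s=1}^T\sigma(b)_s\,W_O^2W_V^2x_s^{(1)}+x_T^{(1)}$. Feed-forward layer: $W_1\in\mathbb R^{V\times d}$ has $v$-th row $w_E(v)^\top$, $W_2\in\mathbb R^{d\times V}$ has $v$-th column $\sum_{u=1}^V\log\pi_b(u\mid v)\,w_U(u)$, and $x_T=W_2\,\mathrm{ReLU}(W_1x_T^{(2)})+x_T^{(2)}$. The logits are $\xi_v=w_U(v)^\top x_T$ for $v\in[V]$ (written $\xi_v(\tau_1,\tau_2,\tau_3)$ to show dependence on the parameters). The associative memory transformer is the case $\tau_1=\tau_2=\tau_3=1$. Orthonormality assumption (A): the $3V+T$ vectors $w_E(v),\ \Phi_1w_E(v),\ w_U(v)$ ($v\in[V]$) and $r_{-i}$ ($0\le i\le T-1$) form an orthonormal family in $\mathbb R^d$, and the $2V$ vectors $W_V^2w_E(v),\ W_V^2\Phi_1w_E(v)$ ($v\in[V]$) form an orthonormal family in $\mathbb R^d$. *)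

From HB Require Import structures.
From mathcomp Require Import all_boot all_order all_algebra.
From mathcomp Require Import all_classical all_reals all_analysis.
Set Implicit Arguments. Unset Strict Implicit. Unset Printing Implicit Defensive.
Import Order.TTheory GRing.Theory Num.Theory.
Local Open Scope ring_scope.

(* Conventions: vectors of R^d are column vectors 'cV[R]_d; positions are
   0-based: the paper's z_1..z_T are z 0 .. z (T-1); the paper's r_{-i}
   (0 <= i <= T-1) is r i. Vocabulary [V] is 'I_V. *)

Section Transformer.
Variables (R : realType) (V d : nat).

Definition dotv (u v : 'cV[R]_d) : R := (u^T *m v) 0 0.

Definition orthonormal_fam (I : finType) (f : I -> 'cV[R]_d) : Prop :=
  forall i j, dotv (f i) (f j) = (i == j)%:R.

Definition softmax (n : nat) (a : nat -> R) (s : nat) : R :=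
  expR (a s) / \sum_(0 <= s' < n) expR (a s').

Definition relu_v (m : nat) (x : 'cV[R]_m) : 'cV[R]_m := map_mx (fun y => Num.max y 0) x.

Variables (wE wU : 'I_V -> 'cV[R]_d) (r : nat -> 'cV[R]_d)
          (Phi1 WV2 : 'M[R]_d) (pib : 'I_V -> 'I_V -> R) (* pib u v = pi_b(u|v) *)
          (T : nat) (z : nat -> 'I_V).

Definition WK1 (tau1 : R) : 'M[R]_d := tau1 *: \sum_(k < V) (wE k *m (r 1%N)^T).
Definition WK2 (tau2 : R) : 'M[R]_d := tau2 *: \sum_(k < V) (wE k *m (Phi1 *m wE k)^T).
Definition WO2 (tau3 : R) : 'M[R]_d := tau3 *: \sum_(v < V) (wU v *m (WV2 *m wE v)^T).

(* first layer; t, s are 0-based positions with s <= t *)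
Definition attn1 (tau1 : R) (t s : nat) : R :=
  dotv (wE (z s) + r (t - s)%N) ((WK1 tau1)^T *m wE (z t)).

Definition x1 (tau1 : R) (t : nat) : 'cV[R]_d :=
  \sum_(0 <= s < t.+1) softmax t.+1 (attn1 tau1 t) s *: (Phi1 *m wE (z s)) + wE (z t).

Definition attn2 (tau1 tau2 : R) (s : nat) : R :=
  dotv (x1 tau1 s) ((WK2 tau2)^T *m x1 tau1 T.-1).

Definition x2 (tau1 tau2 tau3 : R) : 'cV[R]_d :=
  \sum_(0 <= s < T) softmax T (attn2 tau1 tau2) s *: (WO2 tau3 *m WV2 *m x1 tau1 s)
  + x1 tau1 T.-1.

Definition W1 : 'M[R]_(V, d) := \matrix_(v < V, j < d) wE v j 0.
Definition W2 : 'M[R]_(d, V) :=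
  \matrix_(i < d, v < V) (\sum_(u < V) ln (pib u v) *: wU u) i 0.

Definition xT (tau1 tau2 tau3 : R) : 'cV[R]_d :=
  W2 *m relu_v (W1 *m x2 tau1 tau2 tau3) + x2 tau1 tau2 tau3.

Definition xi (tau1 tau2 tau3 : R) (v : 'I_V) : R := dotv (wU v) (xT tau1 tau2 tau3).

Definition fcount (q v : 'I_V) : nat :=
  \sum_(1 <= s < T) ((z s.-1 == q) && (z s == v) : nat).

Definition Ncount (q : 'I_V) : nat :=
  (\sum_(v' < V) fcount q v' + (z 0%N == q : nat))%N.

End Transformer.

(* Under assumption (A) every inner product met in the forward pass is a
   Kronecker delta.  The first-layer score of position s seen from t is
   tau1 [t - s = 1], so as tau1 -> oo each position t > 0 attends only to its
   predecessor and the Phi1 w_E(q)-coordinate of x1_t tends to [z_{t-1} = q]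
   (position 0 attends to itself).  The second-layer score of position s is
   tau2 times that coordinate, the value path sends x1_s to tau3 w_U(z_s), and
   the residual w_E(q) is turned by the feed-forward layer into the bigram
   logits log pi_b(.|q).  Finally a softmax of scores t [b_s] is a ratio
   (A e^t + B) / (N e^t + C), so as tau2 -> oo it becomes the uniform
   distribution on the N positions s with z_{s-1} = q. *)
From HB Require Import structures.
From mathcomp Require Import all_boot all_order all_algebra.
From mathcomp Require Import all_classical all_reals all_analysis.
From mathcomp Require Import ring lra zify.
Import Order.TTheory GRing.Theory Num.Theory.
Import numFieldTopology.Exports numFieldNormedType.Exports.
Set Implicit Arguments. Unset Strict Implicit.
Local Open Scope classical_set_scope.
Local Open Scope ring_scope.

Section DotProduct.
Variables (R : realType) (d : nat).
Implicit Types (u v w : 'cV[R]_d).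

Lemma dotvE u v : dotv u v = \sum_j u j 0 * v j 0.
Proof. by rewrite /dotv mxE; apply: eq_bigr => j _; rewrite mxE. Qed.

Lemma dotvC u v : dotv u v = dotv v u.
Proof. by rewrite !dotvE; apply: eq_bigr => j _; rewrite mulrC. Qed.

Lemma dotvDr u v w : dotv u (v + w) = dotv u v + dotv u w.
Proof. by rewrite /dotv mulmxDr mxE. Qed.

Lemma dotvZr u (a : R) v : dotv u (a *: v) = a * dotv u v.
Proof. by rewrite /dotv -scalemxAr mxE. Qed.

Lemma dotv_sumr u (I : Type) (s : seq I) (P : pred I) (F : I -> 'cV[R]_d) :
  dotv u (\sum_(i <- s | P i) F i) = \sum_(i <- s | P i) dotv u (F i).
Proof. by rewrite /dotv mulmx_sumr summxE. Qed.

Lemma dotvDl u v w : dotv (v + w) u = dotv v u + dotv w u.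
Proof. by rewrite dotvC dotvDr !(dotvC u). Qed.

Lemma dotvZl u (a : R) v : dotv (a *: v) u = a * dotv v u.
Proof. by rewrite dotvC dotvZr dotvC. Qed.

Lemma dotv_suml u (I : Type) (s : seq I) (P : pred I) (F : I -> 'cV[R]_d) :
  dotv (\sum_(i <- s | P i) F i) u = \sum_(i <- s | P i) dotv (F i) u.
Proof. by rewrite dotvC dotv_sumr; apply: eq_bigr => i _; rewrite dotvC. Qed.

Lemma dotv_trmx (A : 'M[R]_d) u v : dotv u (A^T *m v) = dotv (A *m u) v.
Proof. by rewrite /dotv mulmxA trmx_mul. Qed.

Lemma mul_outer_mx u v w : (u *m v^T) *m w = dotv v w *: u.
Proof. by rewrite -mulmxA [v^T *m w]mx11_scalar mul_mx_scalar. Qed.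

End DotProduct.

Lemma sum_eq_scale (R : nzRingType) (M : lmodType R) (V : nat) (j : 'I_V)
    (F : 'I_V -> M) :
  \sum_(k < V) (k == j)%:R *: F k = F j.
Proof.
rewrite (bigD1 j) //= eqxx scale1r big1 ?addr0 // => k /negbTE ->.
by rewrite scale0r.
Qed.

Lemma sum_eq_mul (R : nzRingType) (V : nat) (j : 'I_V) (F : 'I_V -> R) :
  \sum_(k < V) (k == j)%:R * F k = F j.
Proof. exact: (@sum_eq_scale R R^o). Qed.

Lemma sum_nat_eq_mul (R : nzRingType) (m j : nat) (F : nat -> R) : (j < m)%N ->
  \sum_(0 <= s < m) (s == j)%:R * F s = F j.
Proof.
move=> j_lt_m; rewrite big_mkord (bigD1 (Ordinal j_lt_m)) //= eqxx mul1r.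
rewrite big1 ?addr0 // => s s_neq_j; rewrite (_ : (s : nat) == j = false) ?mul0r //.
by apply: contraNF s_neq_j => /eqP s_eq_j; apply/eqP/val_inj.
Qed.

Section Softmax.
Variable R : realType.

Lemma softmax_sum (m : nat) (a w : nat -> R) :
  \sum_(0 <= s < m) softmax m a s * w s =
  (\sum_(0 <= s < m) expR (a s) * w s) / \sum_(0 <= s < m) expR (a s).
Proof. by rewrite mulr_suml; apply: eq_bigr => s _; rewrite /softmax mulrAC. Qed.

Lemma sum_expR_gt0 (m : nat) (a : nat -> R) : (0 < m)%N ->
  0 < \sum_(0 <= s < m) expR (a s).
Proof.
move=> m_gt0; rewrite big_ltn //.
have : 0 <= \sum_(1 <= s < m) expR (a s) by apply: sumr_ge0 => s _; exact: expR_ge0.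
by have := expR_gt0 (a 0%N); lra.
Qed.

Lemma cvg_sum_nat (m : nat) (F : nat -> R -> R) (l : nat -> R) :
  (forall s, (s < m)%N -> F s t @[t --> +oo] --> l s) ->
  \sum_(0 <= s < m) F s t @[t --> +oo] --> \sum_(0 <= s < m) l s.
Proof.
move=> Fl; rewrite big_nat_cond; under eq_cvg do rewrite big_nat_cond.
by apply: cvg_big => [|s /andP[/andP[_ ?] _]]; [exact: add_continuous | exact: Fl].
Qed.

Lemma cvg_softmax_sum (m : nat) (a : R -> nat -> R) (l w : nat -> R) : (0 < m)%N ->
  (forall s, (s < m)%N -> a t s @[t --> +oo] --> l s) ->
  \sum_(0 <= s < m) softmax m (a t) s * w s @[t --> +oo] -->
  \sum_(0 <= s < m) softmax m l s * w s.
Proof.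
move=> m_gt0 al; rewrite softmax_sum; under eq_cvg do rewrite softmax_sum.
have expR_al s : (s < m)%N -> expR (a t s) @[t --> +oo] --> expR (l s).
  by move=> /al; apply: continuous_cvg; exact: continuous_expR.
apply: cvgM.
  by apply: cvg_sum_nat => s /expR_al ?; apply: cvgM; last exact: cvg_cst.
apply: cvgV; first by rewrite gt_eqF // sum_expR_gt0.
exact: cvg_sum_nat.
Qed.

Lemma cvg_expR_ratio (a b n c : R) : 0 < n -> 0 <= c ->
  (a * expR t + b) / (n * expR t + c) @[t --> +oo] --> a / n.
Proof.
move=> n_gt0 c_ge0.
have -> : (fun t => (a * expR t + b) / (n * expR t + c)) =
          (fun t => (a + b * expR (- t)) / (n + c * expR (- t))).
  apply/funext => t; rewrite expRN.
  have et_gt0 : 0 < expR t := expR_gt0 t.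
  have : 0 < n * expR t by exact: mulr_gt0.
  have : 0 <= c * (expR t)^-1 by rewrite mulr_ge0 // invr_ge0 ltW.
  by move=> ? ?; field; rewrite !gt_eqF //; lra.
have -> : a / n = (a + b * 0) / (n + c * 0) by rewrite !mulr0 !addr0.
have e_to0 := @cvgr_expR R.
have cvg_affine_expRN (x y : R) : x + y * expR (- t) @[t --> +oo] --> x + y * 0.
  by apply: cvgD; [exact: cvg_cst | apply: cvgM; [exact: cvg_cst | exact: e_to0]].
apply: cvgM; first exact: cvg_affine_expRN.
by apply: cvgV; [rewrite mulr0 addr0 gt_eqF | exact: cvg_affine_expRN].
Qed.

Lemma cvg_softmax_mask (m : nat) (b : nat -> bool) (w : nat -> R) :
  0 < \sum_(0 <= s < m) (b s)%:R :> R ->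
  \sum_(0 <= s < m) softmax m (fun s => t * (b s)%:R) s * w s @[t --> +oo] -->
  (\sum_(0 <= s < m) (b s)%:R * w s) / \sum_(0 <= s < m) (b s)%:R.
Proof.
set N := \sum_(0 <= s < m) _; set A := \sum_(0 <= s < m) _ => N_gt0.
have expR_mask (t : R) (c : bool) : expR (t * c%:R) = 1 + (expR t - 1) * c%:R.
  by case: c; rewrite ?mulr1 ?mulr0 ?expR0 ?addr0 // addrC subrK.
have N_le_m : N <= m%:R.
  rewrite -[m in m%:R]subn0 -sumr_const_nat.
  by apply: ler_sum => s _; rewrite lern1 leq_b1.
have num t : \sum_(0 <= s < m) expR (t * (b s)%:R) * w s =
             A * expR t + (\sum_(0 <= s < m) w s - A).
  under eq_bigr do rewrite expR_mask mulrDl mul1r -mulrA.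
  by rewrite big_split /= -mulr_sumr -/A; ring.
have den t : \sum_(0 <= s < m) expR (t * (b s)%:R) = N * expR t + (m%:R - N).
  under eq_bigr do rewrite expR_mask.
  by rewrite big_split /= sumr_const_nat subn0 -mulr_sumr -/N; ring.
under eq_cvg do rewrite softmax_sum num den.
by apply: cvg_expR_ratio; rewrite ?subr_ge0.
Qed.

End Softmax.

Section Counting.
Variables (R : realType) (V T : nat) (z : nat -> 'I_V) (q : 'I_V).
Hypothesis T_gt0 : (0 < T)%N.

(* [s.-1] is [0] at [s = 0], so position [0] counts the event [z 0 = q]. *)
Lemma Ncount_sum_prev :
  (Ncount T z q)%:R = \sum_(0 <= s < T) (z s.-1 == q)%:R :> R.
Proof.
rewrite -natr_sum; congr _%:R.
rewrite /Ncount /fcount exchange_big /= [in RHS]big_ltn // addnC.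
congr (_ + _)%N; apply: eq_bigr => s _.
rewrite (bigD1 (z s)) //= eqxx andbT big1 ?addn0 // => v' /negbTE.
by rewrite eq_sym => ->; rewrite andbF.
Qed.

Lemma fcount_sum_prev (v : 'I_V) :
  (fcount T z q v + (v == q) * (z 0%N == q))%:R =
  \sum_(0 <= s < T) (z s.-1 == q)%:R * (z s == v)%:R :> R.
Proof.
under [RHS]eq_bigr do rewrite -natrM.
rewrite -natr_sum; congr _%:R.
rewrite [in RHS]big_ltn // addnC /fcount; congr (_ + _)%N.
  by rewrite /= mulnC; case: eqP => [->|] //; rewrite eq_sym.
by apply: eq_bigr => s _; rewrite mulnb.
Qed.

End Counting.

Section Transformer.
Variables (R : realType) (V d : nat) (wE wU : 'I_V -> 'cV[R]_d) (r : nat -> 'cV[R]_d)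
  (Phi1 WV2 : 'M[R]_d) (pib : 'I_V -> 'I_V -> R) (T : nat) (z : nat -> 'I_V) (q : 'I_V).
Hypotheses (T_ge2 : (2 <= T)%N) (zT : z T.-1 = q).
Hypothesis orthonormal_embeddings :
  orthonormal_fam (fun i : ('I_V + 'I_V) + ('I_V + 'I_T) =>
    match i with
    | inl (inl v) => wE v
    | inl (inr v) => Phi1 *m wE v
    | inr (inl v) => wU v
    | inr (inr k) => r (val k)
    end).
Hypothesis orthonormal_values : orthonormal_fam (fun i : 'I_V + 'I_V =>
    match i with
    | inl v => WV2 *m wE v
    | inr v => WV2 *m (Phi1 *m wE v)
    end).

Let T_gt0 : (0 < T)%N := ltnW T_ge2.

Lemma dotv_wE a b : dotv (wE a) (wE b) = (a == b)%:R.
Proof. exact: (orthonormal_embeddings (inl (inl a)) (inl (inl b))). Qed.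

Lemma dotv_wE_Phi1 a b : dotv (wE a) (Phi1 *m wE b) = 0.
Proof. exact: (orthonormal_embeddings (inl (inl a)) (inl (inr b))). Qed.

Lemma dotv_Phi1 a b : dotv (Phi1 *m wE a) (Phi1 *m wE b) = (a == b)%:R.
Proof. exact: (orthonormal_embeddings (inl (inr a)) (inl (inr b))). Qed.

Lemma dotv_wU_wE a b : dotv (wU a) (wE b) = 0.
Proof. exact: (orthonormal_embeddings (inr (inl a)) (inl (inl b))). Qed.

Lemma dotv_wU_Phi1 a b : dotv (wU a) (Phi1 *m wE b) = 0.
Proof. exact: (orthonormal_embeddings (inr (inl a)) (inl (inr b))). Qed.

Lemma dotv_wU a b : dotv (wU a) (wU b) = (a == b)%:R.
Proof. exact: (orthonormal_embeddings (inr (inl a)) (inr (inl b))). Qed.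

Lemma dotv_r_wE i b : (i < T)%N -> dotv (r i) (wE b) = 0.
Proof.
move=> i_lt_T.
exact: (orthonormal_embeddings (inr (inr (Ordinal i_lt_T))) (inl (inl b))).
Qed.

Lemma dotv_r i j : (i < T)%N -> (j < T)%N -> dotv (r i) (r j) = (i == j)%:R.
Proof.
move=> i_lt_T j_lt_T.
exact: (orthonormal_embeddings (inr (inr (Ordinal i_lt_T))) (inr (inr (Ordinal j_lt_T)))).
Qed.

Lemma dotv_WV2 a b : dotv (WV2 *m wE a) (WV2 *m wE b) = (a == b)%:R.
Proof. exact: (orthonormal_values (inl a) (inl b)). Qed.

Lemma dotv_WV2_Phi1 a b : dotv (WV2 *m wE a) (WV2 *m (Phi1 *m wE b)) = 0.
Proof. exact: (orthonormal_values (inl a) (inr b)). Qed.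

Lemma dotv_wE_x1 tau1 t k : dotv (wE k) (x1 wE r Phi1 z tau1 t) = (k == z t)%:R.
Proof.
rewrite /x1 dotvDr dotv_sumr big1 ?add0r ?dotv_wE // => s _.
by rewrite dotvZr dotv_wE_Phi1 mulr0.
Qed.

Lemma dotv_wU_x1 tau1 t k : dotv (wU k) (x1 wE r Phi1 z tau1 t) = 0.
Proof.
rewrite /x1 dotvDr dotv_sumr big1 ?add0r ?dotv_wU_wE // => s _.
by rewrite dotvZr dotv_wU_Phi1 mulr0.
Qed.

Definition x1_q tau1 s := dotv (x1 wE r Phi1 z tau1 s) (Phi1 *m wE q).

Lemma x1_qE tau1 t : x1_q tau1 t =
  \sum_(0 <= s < t.+1) softmax t.+1 (attn1 wE r z tau1 t) s * (z s == q)%:R.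
Proof.
rewrite /x1_q /x1 dotvDl dotv_suml dotv_wE_Phi1 addr0.
by apply: eq_bigr => s _; rewrite dotvZl dotv_Phi1.
Qed.

(* The first-layer key only matches the relative position r_{-1}. *)
Lemma attn1E tau1 t : (t < T)%N ->
  attn1 wE r z tau1 t = fun s => tau1 * (t - s == 1)%N%:R.
Proof.
move=> t_lt_T; apply/funext => s.
have ts_lt_T : (t - s < T)%N by exact: leq_ltn_trans (leq_subr s t) t_lt_T.
rewrite /attn1 dotv_trmx /WK1 -scalemxAl mulmx_suml dotvZl dotv_suml.
under eq_bigr do rewrite mul_outer_mx dotvZl dotv_wE mulrC.
by rewrite sum_eq_mul dotvDr dotv_r_wE // dotv_r // add0r eq_sym.
Qed.

Lemma attn2E tau1 tau2 : attn2 wE r Phi1 T z tau1 tau2 = fun s => tau2 * x1_q tau1 s.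
Proof.
apply/funext => s.
rewrite /attn2 dotv_trmx /WK2 -scalemxAl mulmx_suml dotvZl dotv_suml.
under eq_bigr do rewrite mul_outer_mx dotvZl dotv_wE_x1 zT mulrC.
by rewrite sum_eq_mul dotvC.
Qed.

Lemma WO2_WV2_x1 tau1 tau3 s :
  WO2 wE wU WV2 tau3 *m WV2 *m x1 wE r Phi1 z tau1 s = tau3 *: wU (z s).
Proof.
have dotv_WV2_x1 v :
    dotv (WV2 *m wE v) (WV2 *m x1 wE r Phi1 z tau1 s) = (v == z s)%:R.
  rewrite /x1 mulmxDr mulmx_sumr dotvDr dotv_sumr big1 ?add0r ?dotv_WV2 // => s' _.
  by rewrite -scalemxAr dotvZr dotv_WV2_Phi1 mulr0.
rewrite -mulmxA /WO2 -scalemxAl mulmx_suml.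
by under eq_bigr do rewrite mul_outer_mx dotv_WV2_x1; rewrite sum_eq_scale.
Qed.

Lemma x2E tau1 tau2 tau3 : x2 wE wU r Phi1 WV2 T z tau1 tau2 tau3 =
  \sum_(0 <= s < T) softmax T (attn2 wE r Phi1 T z tau1 tau2) s *: (tau3 *: wU (z s))
  + x1 wE r Phi1 z tau1 T.-1.
Proof. by rewrite /x2; under eq_bigr do rewrite WO2_WV2_x1. Qed.

Lemma dotv_wE_x2 tau1 tau2 tau3 k :
  dotv (wE k) (x2 wE wU r Phi1 WV2 T z tau1 tau2 tau3) = (k == q)%:R.
Proof.
rewrite x2E dotvDr dotv_wE_x1 zT dotv_sumr big1 ?add0r // => s _.
by rewrite !dotvZr dotvC dotv_wU_wE !mulr0.
Qed.

Lemma dotv_wU_x2 tau1 tau2 tau3 v :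
  dotv (wU v) (x2 wE wU r Phi1 WV2 T z tau1 tau2 tau3) =
  tau3 * \sum_(0 <= s < T) softmax T (attn2 wE r Phi1 T z tau1 tau2) s * (z s == v)%:R.
Proof.
rewrite x2E dotvDr dotv_wU_x1 addr0 dotv_sumr mulr_sumr; apply: eq_bigr => s _.
by rewrite !dotvZr dotv_wU eq_sym mulrCA.
Qed.

Lemma feedforward_one_hot (y : 'cV[R]_d) :
  (forall k, dotv (wE k) y = (k == q)%:R) ->
  W2 wU pib *m relu_v (W1 wE *m y) = \sum_(u < V) ln (pib u q) *: wU u.
Proof.
move=> y_one_hot; apply/matrixP => i j; rewrite [j]ord1 !mxE.
under eq_bigr do rewrite !mxE.
have W1y k : \sum_j0 W1 wE k j0 * y j0 0 = (k == q)%:R.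
  by rewrite -y_one_hot dotvE; apply: eq_bigr => j0 _; rewrite mxE.
under eq_bigr do rewrite W1y max_l ?ler0n // mulrC.
by rewrite sum_eq_mul.
Qed.

Lemma xiE tau1 tau2 tau3 v : xi wE wU r Phi1 WV2 pib T z tau1 tau2 tau3 v =
  ln (pib v q) +
  tau3 * \sum_(0 <= s < T) softmax T (fun s => tau2 * x1_q tau1 s) s * (z s == v)%:R.
Proof.
rewrite /xi /xT dotvDr (feedforward_one_hot (dotv_wE_x2 tau1 tau2 tau3)).
rewrite dotv_wU_x2 attn2E.
congr (_ + _); rewrite dotv_sumr.
under eq_bigr do rewrite dotvZr dotv_wU eq_sym mulrC.
by rewrite sum_eq_mul.
Qed.

Lemma x1_q_cvg s : (s < T)%N -> x1_q tau1 s @[tau1 --> +oo] --> ((z s.-1 == q)%:R : R).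
Proof.
case: s => [_ | k k_lt_T].
  under eq_cvg do
    rewrite x1_qE big_nat1 /softmax big_nat1 (divff (lt0r_neq0 (expR_gt0 _))) mul1r.
  exact: cvg_cst.
under eq_cvg do rewrite x1_qE attn1E //.
have sum_mask (F : nat -> R) :
    \sum_(0 <= s < k.+2) (k.+1 - s == 1)%N%:R * F s = F k.
  rewrite -[RHS](@sum_nat_eq_mul _ k.+2) //; apply: eq_big_nat => s /andP[_ s_lt].
  rewrite (_ : (k.+1 - s == 1)%N = (s == k)) //.
  by apply/idP/idP => /eqP ?; apply/eqP; lia.
have mask_count : \sum_(0 <= s < k.+2) (k.+1 - s == 1)%N%:R = 1 :> R.
  by rewrite -[RHS](sum_mask (fun=> 1)); under [RHS]eq_bigr do rewrite mulr1.
have := @cvg_softmax_mask R k.+2 (fun s => k.+1 - s == 1)%N (fun s => (z s == q)%:R).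
by rewrite sum_mask mask_count divr1; apply; rewrite ltr01.
Qed.

Lemma xi_cvg_tau1 tau2 tau3 v :
  xi wE wU r Phi1 WV2 pib T z tau1 tau2 tau3 v @[tau1 --> +oo] -->
  ln (pib v q) + tau3 * \sum_(0 <= s < T)
    softmax T (fun s => tau2 * (z s.-1 == q)%:R) s * (z s == v)%:R.
Proof.
under eq_cvg do rewrite xiE.
apply: cvgD; first exact: cvg_cst.
apply: cvgM; first exact: cvg_cst.
apply: cvg_softmax_sum => // s s_lt_T.
by apply: cvgM; [exact: cvg_cst | exact: x1_q_cvg].
Qed.

End Transformer.

Theorem proposition3 (R : realType) (V d : nat)
  (wE wU : 'I_V -> 'cV[R]_d) (r : nat -> 'cV[R]_d) (Phi1 WV2 : 'M[R]_d)
  (pib : 'I_V -> 'I_V -> R) (T : nat) (z : nat -> 'I_V) (q : 'I_V) (tau3 : R) :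
  (forall u v, 0 < pib u v) ->
  (forall v, \sum_(u < V) pib u v = 1) ->
  (2 <= T)%N ->
  z T.-1 = q ->
  (* assumption (A), first family: w_E(v), Phi1 w_E(v), w_U(v), r_{-i} (0 <= i <= T-1) *)
  orthonormal_fam (fun i : ('I_V + 'I_V) + ('I_V + 'I_T) =>
    match i with
    | inl (inl v) => wE v
    | inl (inr v) => Phi1 *m wE v
    | inr (inl v) => wU v
    | inr (inr k) => r (val k)
    end) ->
  (* assumption (A), second family: W_V^2 w_E(v), W_V^2 Phi1 w_E(v) *)
  orthonormal_fam (fun i : 'I_V + 'I_V =>
    match i with
    | inl v => WV2 *m wE v
    | inr v => WV2 *m (Phi1 *m wE v)
    end) ->
  (1 <= Ncount T z q)%N ->
  0 < tau3 ->
  forall v : 'I_V,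
    (forall tau2 : R, 0 < tau2 ->
       cvg ((xi wE wU r Phi1 WV2 pib T z tau1 tau2 tau3 v) @[tau1 --> +oo])) /\
    (lim ((xi wE wU r Phi1 WV2 pib T z tau1 tau2 tau3 v) @[tau1 --> +oo]))
      @[tau2 --> +oo] -->
      ln (pib v q) + tau3 * ((fcount T z q v + (v == q) * (z 0%N == q))%:R
                              / (Ncount T z q)%:R).
Proof.
move=> _ _ T_ge2 zT orthoE orthoV N_gt0 _ v.
have T_gt0 : (0 < T)%N by exact: ltnW.
have xi_lim tau2 :=
  xi_cvg_tau1 (pib := pib) T_ge2 zT orthoE orthoV (tau2 := tau2) (tau3 := tau3) (v := v).
split => [tau2 _|]; first exact: cvgP (xi_lim tau2).
under eq_cvg do rewrite (cvg_lim (@Rhausdorff R) (xi_lim _)).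
apply: cvgD; first exact: cvg_cst.
apply: cvgM; first exact: cvg_cst.
rewrite fcount_sum_prev // Ncount_sum_prev //.
by apply: cvg_softmax_mask; rewrite -Ncount_sum_prev // ltr0n.
Qed.
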